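(* Let $\mathbf A$ be a super-paraorthomodular lattice and let $x,y\in\mathrm{Sh}(\mathbf A)$. Then the subalgebra $\mathbf{Sg}(x,y)$ of $\mathbf A$ generated by $x,y$ is distributive if and only if $x$ and $y$ commute in the orthomodular poset $\mathbf{Sh}(\mathbf A)$. In particular (in this case), $\mathbf{Sg}(x,y)$ is a Boolean subalgebra of $\mathbf A$.
   Context: A pseudo-Kleene lattice is an algebra $(A,\land,\lor,{}',0,1)$ that is a bounded lattice with an antitone involution ${}'$ ($x\leq y\Rightarrow y'\leq x'$, $x''=x$) satisfying $x\land x'\leq y\lor y'$. It is super-paraorthomodular if for all $x,y$: (SP1) $x\leq y$ and $x'\land y=(x\land x')\lor(y\land y')$ imply $y\land(x\lor x')=x\lor(y\land y')$; (SP2) $x\leq y$ implies $(x\land x')\lor(y\land y')=(x'\land y)\land(x'\land y)'$. $\mathrm{Sh}(\mathbf A)=\{a\in A:a\land a'=0\}$ and $\mathbf{Sh}(\mathbf A)=(\mathrm{Sh}(\mathbf A),\leq,{}',0,1)$ with inherited order and involution (it is an orthomodular poset). In $\mathbf{Sh}(\mathbf A)$, $x$ and $y$ commute if the meets $x\land y$ and $x\land y'$ exist in $\mathbf{Sh}(\mathbf A)$ and $x=(x\land y)\lor(x\land y')$ there. A Boolean subalgebra is a subalgebra which is a distributive lattice in which $u\land u'=0$ for every element $u$. *)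

From HB Require Import structures.
From mathcomp Require Import all_boot all_order.
Set Implicit Arguments. Unset Strict Implicit. Unset Printing Implicit Defensive.
Import Order.TTheory.
Local Open Scope order_scope.

(* A bounded lattice L (mathcomp tbLatticeType) together with a unary
   operation c playing the role of ' . *)

Section PK.
Context {disp : Order.disp_t} {L : tbLatticeType disp}.

Definition pseudo_Kleene (c : L -> L) : Prop :=
  [/\ (forall x y : L, x <= y -> c y <= c x),
      (forall x : L, c (c x) = x) &
      (forall x y : L, x `&` c x <= y `|` c y)].

Definition super_paraorthomodular (c : L -> L) : Prop :=
  [/\ pseudo_Kleene c,
      (forall x y : L, x <= y ->
         c x `&` y = (x `&` c x) `|` (y `&` c y) ->
         y `&` (x `|` c x) = x `|` (y `&` c y)) &
      (forall x y : L, x <= y ->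
         (x `&` c x) `|` (y `&` c y) = (c x `&` y) `&` c (c x `&` y))].

Definition Sh (c : L -> L) (a : L) : Prop := a `&` c a = \bot.

Definition subalgebra (c : L -> L) (S : L -> Prop) : Prop :=
  [/\ S \bot, S \top,
      (forall a b, S a -> S b -> S (a `&` b)),
      (forall a b, S a -> S b -> S (a `|` b)) &
      (forall a, S a -> S (c a))].

Definition Sg (c : L -> L) (x y : L) : L -> Prop :=
  fun z => forall S, subalgebra c S -> S x -> S y -> S z.

Definition distributive_sub (S : L -> Prop) : Prop :=
  (forall a b e, S a -> S b -> S e -> a `&` (b `|` e) = (a `&` b) `|` (a `&` e)) /\
  (forall a b e, S a -> S b -> S e -> a `|` (b `&` e) = (a `|` b) `&` (a `|` e)).

Definition Boolean_sub (c : L -> L) (S : L -> Prop) : Prop :=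
  distributive_sub S /\ (forall u, S u -> u `&` c u = \bot).

Definition is_glb_in (P : L -> Prop) (a b m : L) : Prop :=
  [/\ P m, m <= a, m <= b & forall z, P z -> z <= a -> z <= b -> z <= m].
Definition is_lub_in (P : L -> Prop) (a b m : L) : Prop :=
  [/\ P m, a <= m, b <= m & forall z, P z -> a <= z -> b <= z -> m <= z].

(* x and y commute in the orthomodular poset Sh(A): the meets x /\ y and
   x /\ y' exist in Sh(A) and x is the join (in Sh(A)) of them. *)
Definition commute_Sh (c : L -> L) (x y : L) : Prop :=
  exists m1 m2 : L,
    [/\ is_glb_in (Sh c) x y m1, is_glb_in (Sh c) x (c y) m2 &
        is_lub_in (Sh c) m1 m2 x].

End PK.

From HB Require Import structures.
From mathcomp Require Import all_boot all_order.
Import Order.TTheory.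
Local Open Scope order_scope.

(* If Sg(x, y) is distributive, then x /\ y and x /\ y' are sharp and their
   join is x /\ (y \/ y') = x, which is commutation in Sh(A).  Conversely, if
   x and y commute then p = x /\ y and q = x /\ y' are sharp with x = p \/ q,
   and super-paraorthomodularity makes p, q, p' /\ y, q' /\ y' pairwise
   orthogonal sharp elements with join 1.  The joins of subfamilies of such an
   orthogonal partition of unity form a Boolean subalgebra (a homomorphic image
   of a power set) containing x and y, hence containing Sg(x, y). *)

Section Subalgebras.
Context {disp : Order.disp_t} {L : tbLatticeType disp} (c : L -> L).

Lemma Sg_subalgebra (x y : L) : subalgebra c (Sg c x y).
Proof.
split=> [S [] // | S [] // | a b Sa Sb S | a b Sa Sb S | a Sa S] hS Sx Sy;
  case: (hS) => _ _ hI hU hC.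
- by apply: hI; [apply: Sa | apply: Sb].
- by apply: hU; [apply: Sa | apply: Sb].
- by apply: hC; apply: Sa.
Qed.

Lemma Sg_l (x y : L) : Sg c x y x.
Proof. by move=> S. Qed.

Lemma Sg_r (x y : L) : Sg c x y y.
Proof. by move=> S. Qed.

Lemma Boolean_sub_subset {S T : L -> Prop} :
  Boolean_sub c S -> (forall z, T z -> S z) -> Boolean_sub c T.
Proof.
move=> [[dI dU] sh] TS; split; last by move=> u /TS; apply: sh.
by split=> a b e /TS Sa /TS Sb /TS Se; [apply: dI | apply: dU].
Qed.

End Subalgebras.

Section PseudoKleene.
Context {disp : Order.disp_t} {L : tbLatticeType disp} {c : L -> L}.
Hypothesis hc : pseudo_Kleene c.

Lemma compl_anti {a b : L} : a <= b -> c b <= c a.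
Proof. by case: hc => anti _ _; apply: anti. Qed.

Lemma complK : involutive c.
Proof. by case: hc. Qed.

Lemma compl_flip {a b : L} : a <= c b -> b <= c a.
Proof. by rewrite -{2}[b]complK; apply: compl_anti. Qed.

Lemma compl_join (a b : L) : c (a `|` b) = c a `&` c b.
Proof.
apply: le_anti; rewrite lexI !compl_anti ?leUl ?leUr //=.
by apply: compl_flip; rewrite leUx; apply/andP; split; apply: compl_flip;
  [exact: leIl | exact: leIr].
Qed.

Lemma compl_meet (a b : L) : c (a `&` b) = c a `|` c b.
Proof. by rewrite -{1}[a]complK -{1}[b]complK -compl_join complK. Qed.

Lemma compl_top : c \top = \bot.
Proof. by apply/eqP; rewrite -lex0 -[\bot]complK compl_anti ?lex1. Qed.

Lemma compl_bot : c \bot = \top.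
Proof. by rewrite -compl_top complK. Qed.

Lemma Sh_compl {a : L} : Sh c a -> Sh c (c a).
Proof. by rewrite /Sh complK meetC. Qed.

Lemma Sh_joinC {a : L} : Sh c a -> a `|` c a = \top.
Proof.
by move=> ha; rewrite -[LHS]complK compl_join complK meetC ha compl_bot.
Qed.

Lemma Sh_meet (u v : L) : Sh c u -> Sh c v ->
  (u `&` v) `&` (c u `|` c v) = (u `&` v `&` c u) `|` (u `&` v `&` c v) ->
  Sh c (u `&` v).
Proof.
move=> hu hv distr; rewrite /Sh compl_meet distr; apply/eqP.
by rewrite join_eq0 -!lex0 -{1}hu -hv !leI2 ?leIl ?leIr.
Qed.

Lemma distributive_Sg_commute (x y : L) : Sh c x -> Sh c y ->
  distributive_sub (Sg c x y) -> commute_Sh c x y.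
Proof.
move=> hx hy [dI _]; have [_ _ sI _ sC] := Sg_subalgebra c x y.
have glb u v : Sh c u -> Sh c v -> Sg c x y u -> Sg c x y v ->
    is_glb_in (Sh c) u v (u `&` v).
  move=> hu hv Su Sv; split; [|exact: leIl|exact: leIr|].
    by apply: Sh_meet hu hv _; apply: dI; [exact: sI | exact: sC | exact: sC].
  by move=> z _ zu zv; rewrite lexI zu zv.
have Sy := Sg_r c x y; have Scy := sC _ Sy.
have ex : (x `&` y) `|` (x `&` c y) = x.
  by rewrite -dI ?Sg_l // Sh_joinC ?meetx1.
have gxy := glb x y hx hy (Sg_l c x y) Sy.
have gxcy := glb x (c y) hx (Sh_compl hy) (Sg_l c x y) Scy.
exists (x `&` y), (x `&` c y); split=> //; split=> //; rewrite ?leIl //.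
by move=> z _ h1 h2; rewrite -ex leUx h1 h2.
Qed.

End PseudoKleene.

Definition orth_partition {disp : Order.disp_t} {L : tbLatticeType disp}
    (c : L -> L) {I : finType} (a : I -> L) :=
  [/\ forall i, Sh c (a i), forall i j, i != j -> a i <= c (a j) &
      \join_(i in [set: I]) a i = \top].

Definition joins_range {disp : Order.disp_t} {L : tbLatticeType disp}
    {I : finType} (a : I -> L) (z : L) : Prop :=
  exists s : {set I}, z = \join_(i in s) a i.

(* With p = x /\ y and q = x /\ y', the element at index i lies below x iff
   i.1 and below y iff i.2. *)
Definition square_partition {disp : Order.disp_t} {L : tbLatticeType disp}
    (c : L -> L) (y p q : L) (i : bool * bool) : L :=
  match i with
  | (true, true) => p
  | (true, false) => q
  | (false, true) => c p `&` y
  | (false, false) => c q `&` c y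
  end.

Section SuperParaorthomodular.
Context {disp : Order.disp_t} {L : tbLatticeType disp} {c : L -> L}.
Hypothesis hspo : super_paraorthomodular c.

Lemma spo_pseudo_Kleene : pseudo_Kleene c.
Proof. by case: hspo. Qed.

Let hc := spo_pseudo_Kleene.

(* SP2 makes both a and b sharp, so that SP1 applies. *)
Lemma paraorthomodular (a b : L) : a <= b -> c a `&` b = \bot -> a = b.
Proof.
case: hspo => _ sp1 sp2 ab ab0.
have e := sp2 a b ab; rewrite ab0 meet0x in e.
have := sp1 a b ab; rewrite ab0 e => /(_ erefl).
move/eqP: e; rewrite join_eq0 => /andP[/eqP ha /eqP hb].
by rewrite hb joinx0 (Sh_joinC hc ha) meetx1.
Qed.

Lemma Sh_compl_meet {a b : L} : a <= b -> Sh c a -> Sh c b -> Sh c (c a `&` b).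
Proof. by case: hspo => _ _ sp2 ab ha hb; rewrite /Sh -sp2 // ha hb joinx0. Qed.

Lemma Sh_join_orth {a b : L} : a <= c b -> Sh c a -> Sh c b -> Sh c (a `|` b).
Proof.
move=> ab ha hb; have := Sh_compl hc (Sh_compl_meet ab ha (Sh_compl hc hb)).
by rewrite compl_meet // !(complK hc).
Qed.

Lemma join_orth_meetK {a b : L} : a <= c b -> Sh c a -> Sh c b ->
  (a `|` b) `&` c b = a.
Proof.
move=> ab ha hb; symmetry; apply: paraorthomodular; first by rewrite lexI leUl.
by rewrite meetCA -compl_join // Sh_join_orth.
Qed.

Lemma orthomodular {a b : L} : a <= b -> Sh c a -> Sh c b ->
  b = a `|` (c a `&` b).
Proof.
move=> ab ha hb; symmetry; apply: paraorthomodular.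
  by rewrite leUx ab leIr.
by rewrite compl_join // meetAC; apply: Sh_compl_meet.
Qed.

Section OrthPartition.
Context {I : finType} {a : I -> L}.

Hypothesis ha : orth_partition c a.

Lemma joins_orth {s t : {set I}} : [disjoint s & t] ->
  \join_(i in s) a i <= c (\join_(i in t) a i).
Proof.
case: ha => _ orth _ st; apply/joinsP => i si; apply: compl_flip => //.
apply/joinsP => j tj; apply: orth; apply: contraTneq tj => ->.
by rewrite (disjointFr st si).
Qed.

Lemma joins_Sh (s : {set I}) : Sh c (\join_(i in s) a i).
Proof.
case: ha => sh orth _; rewrite -big_enum.
elim: (enum s) (enum_uniq s) => [|i r IH] /=.
  by rewrite big_nil /Sh meet0x.
case/andP => ir ur; rewrite big_cons; apply: Sh_join_orth => //; last exact: IH.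
apply: compl_flip => //; apply/joinsP_seq => j jr _; apply: orth.
by apply: contraNneq ir => <-.
Qed.

Lemma joinsI (s t : {set I}) :
  \join_(i in s :&: t) a i = \join_(i in s) a i `&` \join_(i in t) a i.
Proof.
apply: le_anti; rewrite lexI !le_joins ?subsetIl ?subsetIr //=.
have ds : [disjoint s & t :\: s].
  by rewrite disjoints_subset; apply/subsetP => i; rewrite !inE => ->.
have dts := disjointWl (subsetIr t s) ds.
rewrite -{1}(setID t s) joins_setU [s :&: t]setIC.
rewrite -[X in _ <= X]
  (join_orth_meetK (joins_orth dts) (joins_Sh _) (joins_Sh _)).
by rewrite meetC leI2 ?joins_orth.
Qed.

Lemma joinsC (s : {set I}) : c (\join_(i in s) a i) = \join_(i in ~: s) a i.
Proof.
symmetry; apply: paraorthomodular.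
  by rewrite joins_orth // disjoints_subset.
case: ha => _ _ htop.
by rewrite -compl_join // -joins_setU setUC setUCr htop compl_top.
Qed.

Lemma joins_range_subalgebra : subalgebra c (joins_range a).
Proof.
split.
- by exists set0; rewrite big_set0.
- by exists setT; case: ha.
- by move=> _ _ [s ->] [t ->]; exists (s :&: t); rewrite joinsI.
- by move=> _ _ [s ->] [t ->]; exists (s :|: t); rewrite joins_setU.
- by move=> _ [s ->]; exists (~: s); rewrite joinsC.
Qed.

Lemma joins_range_Boolean : Boolean_sub c (joins_range a).
Proof.
split; first split.
- move=> _ _ _ [s ->] [t ->] [u ->].
  by rewrite -!joins_setU -!joinsI -joins_setU setIUr.
- move=> _ _ _ [s ->] [t ->] [u ->].
  by rewrite -!joinsI -!joins_setU -joinsI setUIr.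
- by move=> _ [s ->]; rewrite joinsC -joinsI setICr big_set0.
Qed.

End OrthPartition.

Lemma square_partition_orth {y p q : L} : Sh c y -> Sh c p -> Sh c q ->
  p <= y -> q <= c y -> orth_partition c (square_partition c y p q).
Proof.
move=> hy hp hq py qcy; have hcy := Sh_compl hc hy.
have hr := Sh_compl_meet py hp hy; have ht := Sh_compl_meet qcy hq hcy.
have pq : p <= c q := le_trans py (compl_flip hc qcy).
have pr : p <= c (c p `&` y) by apply/(compl_flip hc)/leIl.
have pt : p <= c (c q `&` c y) := le_trans py (compl_flip hc (leIr _ _)).
have qr : q <= c (c p `&` y).
  by apply/(compl_flip hc)/(le_trans (leIr _ _))/(compl_flip hc).
have qt : q <= c (c q `&` c y) by apply/(compl_flip hc)/leIl.
have rt : c p `&` y <= c (c q `&` c y) :=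
  le_trans (leIr _ _) (compl_flip hc (leIr _ _)).
split.
- by case=> [[] []].
- by case=> [[] []] [[] []] //= _; apply: compl_flip.
have -> : [set: bool * bool] = [set (true, true)] :|: [set (false, true)]
    :|: ([set (true, false)] :|: [set (false, false)]).
  by apply/setP => -[[] []]; rewrite !inE.
rewrite !joins_setU !big_set1 /=.
rewrite -(orthomodular py hp hy) -(orthomodular qcy hq hcy).
(* Plain exact: big_set1 produced the join of a convertible but different
   lattice instance, which ssreflect's matching does not unfold. *)
exact (Sh_joinC hc hy).
Qed.

Lemma commute_Sh_decomp (x y : L) : Sh c y -> commute_Sh c x y ->
  [/\ Sh c (x `&` y), Sh c (x `&` c y) & x = (x `&` y) `|` (x `&` c y)].
Proof.
move=> hy [m1 [m2 [[h1 m1x m1y _] [h2 m2x m2cy _] [_ _ _ lub]]]].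
have o12 : m1 <= c m2 := le_trans m1y (compl_flip hc m2cy).
have ex : x = m1 `|` m2.
  apply: le_anti; rewrite leUx m1x m2x !andbT.
  by apply: lub; [exact: Sh_join_orth | exact: leUl | exact: leUr].
have e1 : x `&` c m2 = m1 by rewrite ex join_orth_meetK.
have e2 : x `&` c m1 = m2 by rewrite ex joinC join_orth_meetK // compl_flip.
have E1 : m1 = x `&` y.
  apply: paraorthomodular; first by rewrite lexI m1x m1y.
  rewrite meetA [c m1 `&` x]meetC e2; apply/eqP.
  by rewrite -lex0 -hy meetC leI2.
have E2 : m2 = x `&` c y.
  apply: paraorthomodular; first by rewrite lexI m2x m2cy.
  rewrite meetA [c m2 `&` x]meetC e1; apply/eqP.
  by rewrite -lex0 -hy leI2.
by rewrite -E1 -E2.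
Qed.

Lemma commute_Sg_Boolean (x y : L) : Sh c y -> commute_Sh c x y ->
  Boolean_sub c (Sg c x y).
Proof.
move=> hy /(commute_Sh_decomp x y hy) [hp hq ex].
have hpart := square_partition_orth hy hp hq (leIr _ _) (leIr _ _).
apply: (Boolean_sub_subset c (joins_range_Boolean hpart)) => z; apply.
- exact: joins_range_subalgebra.
- exists ([set (true, true)] :|: [set (true, false)]).
  by rewrite joins_setU !big_set1.
- exists ([set (true, true)] :|: [set (false, true)]).
  rewrite joins_setU !big_set1.
  exact: orthomodular (leIr _ _) hp hy.
Qed.

End SuperParaorthomodular.

Theorem corollary4p6 (disp : Order.disp_t) (L : tbLatticeType disp)
    (c : L -> L) (x y : L) :
  super_paraorthomodular c -> Sh c x -> Sh c y ->
  (distributive_sub (Sg c x y) <-> commute_Sh c x y) /\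
  (commute_Sh c x y -> Boolean_sub c (Sg c x y)).
Proof.
move=> hspo hx hy; have Boolean := commute_Sg_Boolean hspo x y hy.
split=> //; split=> [|/Boolean []//].
exact: distributive_Sg_commute (spo_pseudo_Kleene hspo) x y hx hy.
Qed.
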